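(* Let $S$ be a locally compact Hausdorff space with Borel $\sigma$-algebra $\mathscr{S}$, let $\mathscr{S}_0$ be an algebra of subsets of $S$ generating $\mathscr{S}$, and let $X=(X_1,\ldots,X_n)$ be an exchangeable random element of $S^n$ with law $P$, such that: (a) for every $\epsilon>0$ there exist $V\in\mathscr{S}_0$ and a compact $K$ with $V\subset K$ and $\mathbb{P}(X_1\in V)\ge1-\epsilon$; (b) for every $\epsilon>0$ and $V\in\mathscr{S}_0$ there exist an open $O$ and $W\in\mathscr{S}_0$ with $V\subset O\subset W$ and $\mathbb{P}(X_1\in W\setminus V)\le\epsilon$. Suppose there is an increasing sequence $\mathscr{G}_1\subset\mathscr{G}_2\subset\cdots$ of $\sigma$-algebras on $S$ with $\bigcup_k\mathscr{G}_k=\mathscr{S}_0$, and for each $k$ a probability measure $P_k$ on $(S^n,\mathscr{G}_k^n)$ such that \[ \lim_{k\to\infty}\sup_{A\in\mathscr{G}_k^n}|P_k(A)-P(A)|=0, \] and suppose that for some $N>n$ every $P_k$ is $N$-extendible. Then $P$ is $N$-extendible.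
   Context: $\mathscr{G}_k^n$ denotes the product $\sigma$-algebra on $S^n$. A probability measure on $S^m$ (with a product $\sigma$-algebra) is exchangeable if it is invariant under all permutations of coordinates. For $N\ge n$, an exchangeable probability measure $P_n$ on $(S^n,\mathscr{G}^n)$ is $N$-extendible if there is an exchangeable probability measure $P_N$ on $(S^N,\mathscr{G}^N)$ with $P_n(A)=P_N(A\times S^{N-n})$ for all $A\in\mathscr{G}^n$ (here $\mathscr{G}$ is $\mathscr{G}_k$ for $P_k$ and $\mathscr{S}$ for $P$). *)

From HB Require Import structures.
From mathcomp Require Import all_boot all_order all_algebra all_fingroup.
From mathcomp Require Import all_classical all_reals all_analysis.
Set Implicit Arguments. Unset Strict Implicit. Unset Printing Implicit Defensive.
Import Order.TTheory GRing.Theory Num.Theory numFieldNormedType.Exports.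
Local Open Scope classical_set_scope.
Local Open Scope ring_scope.

Definition set_algebra (T : Type) (G : set (set T)) : Prop :=
  [/\ G setT, (forall A, G A -> G (~` A)) & (forall A B, G A -> G B -> G (A `|` B))].

Definition gen_sigma (T : Type) (G : set (set T)) : set (set T) :=
  smallest (sigma_algebra setT) G.

Definition borel_sets (S : topologicalType) : set (set S) := gen_sigma (@open S).
Arguments borel_sets : clear implicits.

(* S^m is modelled as 'I_m -> S; the product sigma-algebra G^m is generated
   by the measurable cylinders {x | x i \in A}, A \in G. *)
Definition prod_sigma (S : Type) (m : nat) (G : set (set S)) : set (set ('I_m -> S)) :=
  gen_sigma [set C | exists i : 'I_m, exists2 A, G A & C = (fun x => x i) @^-1` A].
Arguments prod_sigma {S} m G.

Definition is_probability (R : realType) (T : Type) (F : set (set T)) (mu : set T -> R) : Prop :=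
  [/\ mu setT = 1,
      (forall A, F A -> 0 <= mu A) &
      (forall B : nat -> set T, (forall i, F (B i)) -> trivIset setT B ->
         (fun m => \sum_(i < m) mu (B i)) @ \oo --> mu (\bigcup_i B i))].

Definition exchangeable (R : realType) (S : Type) (m : nat) (G : set (set S))
  (mu : set ('I_m -> S) -> R) : Prop :=
  forall (s : {perm 'I_m}) (A : set ('I_m -> S)), prod_sigma m G A ->
    mu A = mu ([set x : 'I_m -> S | A (fun i => x (s i))]).

(* A x S^(N-n), seen as a subset of S^N *)
Definition cyl_ext (S : Type) (n N : nat) (hnN : (n <= N)%N) (A : set ('I_n -> S))
  : set ('I_N -> S) :=
  [set y | A (fun i : 'I_n => y (widen_ord hnN i))].

Definition extendible (R : realType) (S : Type) (n N : nat) (hnN : (n <= N)%N)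
  (G : set (set S)) (P : set ('I_n -> S) -> R) : Prop :=
  is_probability (prod_sigma n G) P /\ exchangeable G P /\
  exists PN : set ('I_N -> S) -> R,
    [/\ is_probability (prod_sigma N G) PN, exchangeable G PN &
        forall A, prod_sigma n G A -> P A = PN (cyl_ext hnN A)].

From HB Require Import structures.
From mathcomp Require Import all_boot all_order all_algebra all_fingroup.
From mathcomp Require Import all_classical all_reals all_analysis.
From mathcomp Require Import ring lra.
Import Order.TTheory GRing.Theory Num.Theory numFieldNormedType.Exports.
Set Implicit Arguments. Unset Strict Implicit. Unset Printing Implicit Defensive.
Local Open Scope classical_set_scope.
Local Open Scope ring_scope.

(* Choose N-extensions PN_k of the P_k and let Q be a cluster point of (PN_k)
   in the compact cube [0,1]^(sets of S^N) (Tychonoff).  Q is finitely additive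
   and exchangeable on the algebra of sets lying in some G_k^N, and its
   n-marginal is P since P_k -> P uniformly.  By exchangeability every
   one-dimensional marginal of Q is that of P, so (a) and (b) make Q inner
   regular by compact boxes and outer regular by open boxes on the semiring of
   S0-boxes; compactness then turns a countable cover of a box by boxes into a
   finite one up to epsilon, i.e. Q is sigma-additive there.  Its Caratheodory
   extension is the required exchangeable extension of P, exchangeability and
   consistency passing from boxes to Borel sets by the pi-lambda theorem. *)

Lemma in_big_setU (T : Type) m (E : 'I_m -> set T) x :
  (\big[setU/set0]_(i < m) E i) x <-> exists i, E i x.
Proof.
rewrite -bigcup_seq; split=> [[i _ Ex]|[i Ex]]; first by exists i.
by exists i => //=; rewrite mem_index_enum.
Qed.

Lemma in_big_setI (T : Type) m (E : 'I_m -> set T) x :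
  (\big[setI/setT]_(i < m) E i) x <-> forall i, E i x.
Proof.
rewrite -bigcap_seq; split=> [Ex i|Ex i _]; last exact: Ex.
by apply: Ex; rewrite /= mem_index_enum.
Qed.

Section SetAlgebra.
Variables (T : Type) (H : set (set T)).
Hypothesis algH : set_algebra H.

Lemma set_algebraT : H setT. Proof. by case: algH. Qed.

Lemma set_algebraC A : H A -> H (~` A). Proof. by case: algH => _ + _; apply. Qed.

Lemma set_algebraU A B : H A -> H B -> H (A `|` B).
Proof. by case: algH => _ _; apply. Qed.

Lemma set_algebra0 : H set0.
Proof. by rewrite -setCT; exact/set_algebraC/set_algebraT. Qed.

Lemma set_algebraI A B : H A -> H B -> H (A `&` B).
Proof.
by move=> HA HB; rewrite -[A `&` B]setCK setCI; apply/set_algebraC/set_algebraU;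
  exact: set_algebraC.
Qed.

Lemma set_algebraD A B : H A -> H B -> H (A `\` B).
Proof. by move=> HA HB; rewrite setDE; apply: set_algebraI => //; exact: set_algebraC. Qed.

Lemma set_algebra_big_setU m (E : 'I_m -> set T) :
  (forall i, H (E i)) -> H (\big[setU/set0]_(i < m) E i).
Proof. by move=> HE; elim/big_ind: _ => //; [exact: set_algebra0|exact: set_algebraU]. Qed.

Lemma set_algebra_big_setI m (E : 'I_m -> set T) :
  (forall i, H (E i)) -> H (\big[setI/setT]_(i < m) E i).
Proof. by move=> HE; elim/big_ind: _ => //; [exact: set_algebraT|exact: set_algebraI]. Qed.

End SetAlgebra.

Lemma sigma_algebra_set_algebra (T : Type) (F : set (set T)) :
  sigma_algebra setT F -> set_algebra F.
Proof.
case=> F0 FD FU; split.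
- by rewrite -(setD0 setT); exact: FD.
- by move=> A FA; rewrite -setTD; exact: FD.
- by move=> A B FA FB; rewrite -bigcup2E; apply: FU => -[|[|i]].
Qed.

Lemma gen_sigma_set_algebra (T : Type) (C : set (set T)) : set_algebra (gen_sigma C).
Proof. exact/sigma_algebra_set_algebra/smallest_sigma_algebra. Qed.

Lemma gen_sigma_sub (T : Type) (C D : set (set T)) :
  C `<=` gen_sigma D -> gen_sigma C `<=` gen_sigma D.
Proof. by move=> CD; apply: smallest_sub => //; exact: smallest_sigma_algebra. Qed.

Lemma preimage_gen_sigma (X Y : Type) (f : X -> Y) (CX : set (set X)) (CY : set (set Y)) :
  (forall B, CY B -> gen_sigma CX (f @^-1` B)) ->
  forall B, gen_sigma CY B -> gen_sigma CX (f @^-1` B).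
Proof.
move=> fC; apply: smallest_sub => //; split.
- by rewrite preimage_set0; exact: sigma_algebra0.
- by move=> A FA; rewrite setTD -preimage_setC -setTD; exact: sigma_algebraCD.
- by move=> A FA; rewrite preimage_bigcup; exact: sigma_algebra_bigcup.
Qed.

Definition additive_probability (R : realType) (T : Type) (H : set (set T))
    (mu : set T -> R) :=
  [/\ mu setT = 1, (forall A, H A -> 0 <= mu A) &
      (forall A B, H A -> H B -> A `&` B = set0 -> mu (A `|` B) = mu A + mu B)].

Section AdditiveProbability.
Variables (R : realType) (T : Type) (H : set (set T)) (mu : set T -> R).
Hypotheses (algH : set_algebra H) (mu_prob : additive_probability H mu).

Lemma additive_probT : mu setT = 1. Proof. by case: mu_prob. Qed.

Lemma additive_prob_ge0 A : H A -> 0 <= mu A.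
Proof. by case: mu_prob => _ + _; apply. Qed.

Lemma additive_probU A B : H A -> H B -> A `&` B = set0 -> mu (A `|` B) = mu A + mu B.
Proof. by case: mu_prob => _ _; apply. Qed.

Lemma additive_prob0 : mu set0 = 0.
Proof.
have H0 := set_algebra0 algH.
by have := additive_probU H0 H0 (set0I _); rewrite setU0; lra.
Qed.

Lemma additive_probD A B : H A -> H B -> B `<=` A -> mu A = mu B + mu (A `\` B).
Proof.
move=> HA HB BA; rewrite -additive_probU ?setDUK //; first exact: set_algebraD.
by rewrite setDE setICA setICr setI0.
Qed.

Lemma le_additive_prob A B : H A -> H B -> B `<=` A -> mu B <= mu A.
Proof.
move=> HA HB BA; rewrite (additive_probD HA HB BA) lerDl.
by apply: additive_prob_ge0; exact: set_algebraD.
Qed.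

Lemma additive_prob_le1 A : H A -> mu A <= 1.
Proof. by move=> HA; rewrite -additive_probT le_additive_prob //; exact: set_algebraT. Qed.

Lemma additive_probC A : H A -> mu (~` A) = 1 - mu A.
Proof.
move=> HA; rewrite -additive_probT (additive_probD (set_algebraT algH) HA) //.
by rewrite setTD addrAC subrr add0r.
Qed.

Lemma additive_prob_subadditive A B : H A -> H B -> mu (A `|` B) <= mu A + mu B.
Proof.
move=> HA HB; have HUA : H ((A `|` B) `\` A) by apply: set_algebraD => //; exact: set_algebraU.
rewrite -(setDUK (@subsetUl _ A B)) additive_probU //; last first.
  by rewrite setDE setICA setICr setI0.
by rewrite lerD2l le_additive_prob // => x [[]].
Qed.

Lemma additive_prob_big_subadditive m (E : 'I_m -> set T) : (forall i, H (E i)) ->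
  mu (\big[setU/set0]_(i < m) E i) <= \sum_(i < m) mu (E i).
Proof.
elim: m E => [|m IH] E HE; first by rewrite !big_ord0 additive_prob0.
rewrite !big_ord_recr /=; apply: le_trans (additive_prob_subadditive _ _) _.
- exact: set_algebra_big_setU.
- exact: HE.
by rewrite lerD2r IH.
Qed.

Lemma additive_prob_big_additive m (E : 'I_m -> set T) : (forall i, H (E i)) ->
  (forall i j, i != j -> E i `&` E j = set0) ->
  mu (\big[setU/set0]_(i < m) E i) = \sum_(i < m) mu (E i).
Proof.
elim: m E => [|m IH] E HE dE; first by rewrite !big_ord0 additive_prob0.
rewrite !big_ord_recr /= additive_probU; first last.
- apply/seteqP; split => x // [/in_big_setU [i Ei] Em].
  have ne : widen_ord (leqnSn m) i != ord_max by rewrite neq_ltn /= ltn_ord.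
  by rewrite -(dE _ _ ne).
- exact: HE.
- exact: set_algebra_big_setU.
rewrite IH // => i j ij; apply: dE.
by apply: contra ij => /eqP [] ij; apply/eqP/val_inj.
Qed.

End AdditiveProbability.

Lemma cvg_near_cst_eq (R : realType) (u : nat -> R) a b :
  u @ \oo --> a -> (\forall m \near \oo, u m = b) -> a = b.
Proof. by move=> ua ub; apply: (norm_cvg_unique ua); exact: cvg_near_cst. Qed.

Section Probability.
Variables (R : realType) (T : Type) (F : set (set T)) (mu : set T -> R).
Hypotheses (sigmaF : sigma_algebra setT F) (mu_prob : is_probability F mu).

Lemma probability0 : mu set0 = 0.
Proof.
case: mu_prob => _ _ mu_sigma.
have F0 : F set0 by case: sigmaF.
have disj : trivIset setT (fun _ : nat => @set0 T) by move=> i j _ _; rewrite set0I => -[].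
have := mu_sigma _ (fun=> F0) disj; rewrite bigcup0 // => cvg0.
have cvg1 : (fun m => \sum_(i < m.+1) mu set0) @ \oo --> mu set0.
  by rewrite (cvg_shiftS (fun m => \sum_(i < m) mu set0)).
have cvg_diff : (fun m => \sum_(i < m.+1) mu set0 - \sum_(i < m) mu set0) @ \oo --> 0.
  by rewrite -[X in _ --> X](subrr (mu set0)); exact: cvgB.
apply/esym; apply: (cvg_near_cst_eq cvg_diff); apply: nearW => m /=.
by rewrite big_ord_recr /= addrAC subrr add0r.
Qed.

Lemma probability_additive : additive_probability F mu.
Proof.
case: mu_prob => mu1 mu_ge0 mu_sigma; split => // A B FA FB AB.
have F2 i : F (bigcup2 A B i) by case: i => [|[|i]] //=; case: sigmaF.
have := mu_sigma _ F2; rewrite -trivIset_bigcup2 bigcup2E => /(_ AB) mu_cvg.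
apply: (cvg_near_cst_eq mu_cvg); near=> m.
have m2 : (2 <= m)%N by near: m; exists 2%N.
rewrite -(subnKC m2) big_split_ord /= 2!big_ord_recr /= big_ord0 add0r.
by rewrite big1 ?addr0 // => i _; exact: probability0.
Unshelve. all: by end_near.
Qed.

End Probability.

Lemma probability_unique (R : realType) (T : Type) (C : set (set T)) (mu1 mu2 : set T -> R) :
  setI_closed C -> C setT ->
  is_probability (gen_sigma C) mu1 -> is_probability (gen_sigma C) mu2 ->
  (forall A, C A -> mu1 A = mu2 A) ->
  forall A, gen_sigma C A -> mu1 A = mu2 A.
Proof.
move=> CI CT p1 p2 mu12.
have sigmaC : sigma_algebra setT (gen_sigma C) by exact: smallest_sigma_algebra.
have algC := sigma_algebra_set_algebra sigmaC.
have f1 := probability_additive sigmaC p1; have f2 := probability_additive sigmaC p2.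
pose D := [set A | gen_sigma C A /\ mu1 A = mu2 A].
have dynD : dynkin D.
  split.
  - by split; [exact: (set_algebraT algC)|rewrite (additive_probT f1) (additive_probT f2)].
  - move=> A [CA eA]; split; first exact: (set_algebraC algC).
    by rewrite (additive_probC algC f1 CA) (additive_probC algC f2 CA) eA.
  - move=> B tB DB; have CB i := (DB i).1.
    split; first by case: sigmaC => _ _; apply.
    case: p1 => _ _ /(_ B CB tB) cvg1; case: p2 => _ _ /(_ B CB tB) cvg2.
    apply: (norm_cvg_unique cvg1); apply: cvg_trans cvg2; apply: near_eq_cvg.
    by apply: nearW => m; apply: eq_bigr => i _; rewrite (DB i).2.
have CD : C `<=` D by move=> A CA; split; [exact: sub_sigma_algebra|exact: mu12].
have := smallest_sub dynD CD.
by rewrite setI_closed_g_dynkin_g_sigma_algebra // => sD A /sD [].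
Qed.

Lemma probability_preimage (R : realType) (X Y : Type) (FX : set (set X))
    (FY : set (set Y)) (h : X -> Y) (mu : set X -> R) :
  is_probability FX mu -> (forall A, FY A -> FX (h @^-1` A)) ->
  is_probability FY (fun A => mu (h @^-1` A)).
Proof.
case=> mu1 mu_ge0 mu_sigma hF; split.
- by rewrite preimage_setT.
- by move=> A FA; apply: mu_ge0; exact: hF.
- move=> B FB tB; rewrite preimage_bigcup; apply: mu_sigma => [i|]; first exact: hF.
  by move=> i j _ _ [x [Bi Bj]]; apply: tB => //; exists (h x).
Qed.

Definition box (S : Type) (m : nat) (B : 'I_m -> set S) : set ('I_m -> S) :=
  [set x | forall i, B i (x i)].

Definition rects (S : Type) (m : nat) (C : set (set S)) : set (set ('I_m -> S)) :=
  [set A | exists2 B : 'I_m -> set S, (forall i, C (B i)) & box B = A].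
Arguments rects {S} m C.

Lemma le_prod_sigma (S : Type) m (F1 F2 : set (set S)) :
  F1 `<=` F2 -> prod_sigma m F1 `<=` prod_sigma m F2.
Proof.
by move=> F12; apply: sub_sigma_algebra2 => _ [i [E F1E ->]]; exists i; exists E => //; exact: F12.
Qed.

Lemma prod_sigma_reindex (S : Type) m m' (F : set (set S)) (g : 'I_m -> 'I_m') A :
  prod_sigma m F A -> prod_sigma m' F [set y : 'I_m' -> S | A (fun i => y (g i))].
Proof.
apply: (preimage_gen_sigma (f := fun y : 'I_m' -> S => fun i => y (g i))).
by move=> _ [i [E FE ->]]; apply: sub_sigma_algebra; exists (g i); exists E.
Qed.

Lemma rects_prod_sigma (S : Type) m (C F : set (set S)) :
  C `<=` F -> rects m C `<=` prod_sigma m F.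
Proof.
move=> CF _ [B CB <-].
have -> : box B = \big[setI/setT]_(i < m) ((fun x => x i) @^-1` B i).
  by apply/seteqP; split => x; rewrite /= in_big_setI.
apply: set_algebra_big_setI; first exact: gen_sigma_set_algebra.
by move=> i; apply: sub_sigma_algebra; exists i; exists (B i) => //; exact: CF.
Qed.

Lemma coord_preimage_rects (S : Type) m (C : set (set S)) (i : 'I_m) E :
  C setT -> C E -> rects m C ((fun x : 'I_m -> S => x i) @^-1` E).
Proof.
move=> CT CE; exists (fun j => if j == i then E else setT); first by move=> j; case: eqP.
by apply/seteqP; split => x /=; [move=> /(_ i); rewrite eqxx|move=> Ex j; case: eqP => [->|]].
Qed.

Lemma prod_sigma_gen_rects (S : Type) m (C : set (set S)) : C setT ->
  prod_sigma m (gen_sigma C) = gen_sigma (rects m C).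
Proof.
move=> CT; apply/seteqP; split; apply: gen_sigma_sub.
- move=> _ [i [E CE ->]]; apply: (preimage_gen_sigma _ CE) => B CB.
  by apply: sub_sigma_algebra; exact: coord_preimage_rects.
- by apply: rects_prod_sigma; exact: sub_sigma_algebra.
Qed.

Lemma rects_perm (S : Type) m (C : set (set S)) (s : {perm 'I_m}) A :
  rects m C A -> rects m C [set x | A (fun i => x (s i))].
Proof.
move=> [B CB <-]; exists (fun j => B (s^-1%g j)) => //.
apply/seteqP; split => x /= Bx j; first by have := Bx (s j); rewrite permK.
by have := Bx (s^-1%g j); rewrite permKV.
Qed.

Lemma rects_cyl_ext (S : Type) n N (hnN : (n <= N)%N) (C : set (set S)) A :
  C setT -> rects n C A -> rects N C (cyl_ext hnN A).
Proof.
move=> CT [B CB <-]; exists (fun j : 'I_N => if insub (val j) is Some i then B i else setT).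
  by move=> j; case: insubP.
apply/seteqP; split => x /= Bx.
- move=> i; have := Bx (widen_ord hnN i).
  case: insubP => [i' _ ei'|]; last by rewrite /= ltn_ord.
  by have -> : i' = i by apply: val_inj; rewrite ei'.
- move=> j; case: insubP => [i _ ei|//].
  by have -> : j = widen_ord hnN i by apply: val_inj; rewrite /= ei.
Qed.

Section RectsSemiring.
Variables (S : Type) (m : nat) (C : set (set S)).
Hypothesis algC : set_algebra C.

Lemma rectsT : rects m C setT.
Proof. by exists (fun=> setT) => [_|]; [exact: set_algebraT|apply/seteqP; split]. Qed.

Lemma rects0 : (0 < m)%N -> rects m C set0.
Proof.
move=> m0; exists (fun=> set0) => [_|]; first exact: set_algebra0.
by apply/seteqP; split => x //= /(_ (Ordinal m0)).
Qed.

Lemma rects_setI_closed : setI_closed (rects m C).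
Proof.
move=> _ _ [B CB <-] [B' CB' <-]; exists (fun i => B i `&` B' i).
  by move=> i; exact: set_algebraI.
by apply/seteqP; split => x /=; [move=> Bx; split => i; case: (Bx i)|move=> [Bx B'x] i].
Qed.

Lemma rects_semi_setD_closed : semi_setD_closed (rects m C).
Proof.
move=> _ _ [a Ca <-] [b Cb <-].
(* [box a `\` box b] is cut into the boxes [D j], [j] being the first coordinate outside [b] *)
pose c (j i : 'I_m) := if (i < j)%N then a i `&` b i else if i == j then a i `\` b i else a i.
pose D j := box (c j).
exists [set D j | j in setT]; split.
- exact/finite_image/finite_finset.
- move=> _ [j _ <-]; exists (c j) => // i; rewrite /c.
  case: ltnP => _; first exact: set_algebraI.
  by case: eqP => _ //; exact: set_algebraD.
- apply/seteqP; split => [x [ax bx]|x [_ [j _ <-] Djx]].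
  + have [j0 bj0] : exists j, ~ b j (x j).
      by apply: contrapT => nb; apply: bx => i; apply: contrapT => bi; apply: nb; exists i.
    pose P j := ~~ `[< b j (x j) >].
    have Pj0 : P j0 by apply/negP => /asboolP.
    case: (arg_minnP (@nat_of_ord m) Pj0) => j /negP bj jmin.
    exists (D j); first by exists j.
    move=> i; rewrite /c; case: ltnP => ij; last first.
      by case: eqP => [->|_]; [split=> // /asboolP|exact: ax].
    split=> //; apply: contrapT => nbi.
    have /jmin : P i by apply/negP => /asboolP.
    by rewrite leqNgt ij.
  + split=> [i|bx].
      by move: (Djx i); rewrite /c; case: ltnP => _; [case|case: eqP => _ //; case].
    by move: (Djx j); rewrite /c ltnn eqxx => -[_]; exact.
- move=> _ _ [j _ <-] [j' _ <-] [x [Djx Dj'x]].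
  have [lt_jj'|lt_j'j|/val_inj -> //] := ltngtP j j'.
  - by move: (Dj'x j) (Djx j); rewrite /c lt_jj' ltnn eqxx => -[_ ?] [].
  - by move: (Djx j') (Dj'x j'); rewrite /c lt_j'j ltnn eqxx => -[_ ?] [].
Qed.

End RectsSemiring.

Lemma cluster_cvg_eq (R : realType) (T : topologicalType) (F : set_system T)
    {FF : Filter F} (q : T) (g : T -> R) c :
  cluster F q -> continuous g -> g @ F --> c -> g q = c.
Proof.
rewrite cluster_cvgE => -[G PG [Gq FG]] gc Fgc.
have Ggq : g @ G --> g q by exact: cvg_trans (cvg_app g Gq) (gc q).
exact: norm_cvg_unique Ggq (cvg_trans (cvg_app g FG) Fgc).
Qed.

Section UnitCube.
Import ArrowAsProduct.
Variables (R : realType) (I : eqType) (f : nat -> I -> R).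
Hypothesis f01 : forall k i, 0 <= f k i <= 1.

Lemma unit_cube_cluster_point : exists Q : I -> R, [/\ forall i, 0 <= Q i <= 1,
  forall A c, (fun k => f k A) @ \oo --> c -> Q A = c,
  forall A B C, (\forall k \near \oo, f k A = f k B + f k C) -> Q A = Q B + Q C &
  forall A B, (\forall k \near \oo, f k A = f k B) -> Q A = Q B].
Proof.
pose cube := [set y : I -> R | forall i, `[0, 1]%classic (y i)].
have cube_compact : compact cube.
  by apply: (@tychonoff I (fun=> R) (fun=> `[0, 1]%classic)) => _; exact: segment_compact.
have f_cube : (f @ \oo) cube by exists 0%N => // k _ i; rewrite /= in_itv; exact: f01.
have [Q [cubeQ clQ]] := cube_compact _ (fmap_proper_filter f eventually_filter) f_cube.
have coord_cont A : continuous (fun y : I -> R => y A) by exact: proj_continuous.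
exists Q; split.
- by move=> i; have := cubeQ i; rewrite /= in_itv.
- by move=> A c; apply: (cluster_cvg_eq clQ (coord_cont A)).
- move=> A B C fABC; apply/eqP; rewrite -subr_eq0; apply/eqP.
  apply: (cluster_cvg_eq (g := fun y => y A - (y B + y C)) clQ).
    by move=> y; exact: continuousB (coord_cont A y) (continuousD (coord_cont B y) (coord_cont C y)).
  by apply: cvg_near_cst; apply: filterS fABC => k /= ->; rewrite subrr.
- move=> A B fAB; apply/eqP; rewrite -subr_eq0; apply/eqP.
  apply: (cluster_cvg_eq (g := fun y => y A - y B) clQ).
    by move=> y; exact: continuousB (coord_cont A y) (coord_cont B y).
  by apply: cvg_near_cst; apply: filterS fAB => k /= ->; rewrite subrr.
Qed.

End UnitCube.

Section BoxCover.
Import ArrowAsProduct.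
Variables (S : topologicalType) (m : nat).

Lemma open_box (O : 'I_m -> set S) : (forall j, open (O j)) -> open (box O).
Proof.
move=> oO; have -> : box O = \big[setI/setT]_(j < m) ((fun x : 'I_m -> S => x j) @^-1` O j).
  by apply/seteqP; split => x; rewrite /= in_big_setI.
elim/big_ind: _ => [|A B|j _]; [exact: openT|exact: openI|].
by apply: open_comp (oO j) => x _; exact: proj_continuous.
Qed.

Lemma compact_increasing_subcover (K : set ('I_m -> S)) (U : nat -> set ('I_m -> S)) :
  compact K -> (forall i, open (U i)) -> K `<=` \bigcup_i U i ->
  exists k, K `<=` \big[setU/set0]_(i < k) U i.
Proof.
move=> cK oU KU; apply: contrapT => nocover.
pose B k := K `\` \big[setU/set0]_(i < k) U i.
have B_nonempty k : B k !=set0.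
  apply: contrapT => Bk0; apply: nocover; exists k => x Kx; apply: contrapT => nUx.
  by apply: Bk0; exists x.
have B_decr i j : (i <= j)%N -> B j `<=` B i.
  by move=> ij x [Kx nUx]; split=> // Ux; apply: nUx; exact: (subset_bigsetU ij Ux).
have FB : ProperFilter (filter_from setT B).
  apply: filter_from_proper; last by move=> i _; exact: B_nonempty.
  apply: filter_from_filter; first by exists 0%N.
  move=> i j _ _; exists (maxn i j) => //.
  by move=> x Bx; split; apply: B_decr Bx; [exact: leq_maxl|exact: leq_maxr].
have [x [Kx clx]] : exists x, K x /\ cluster (filter_from setT B) x.
  by apply: cK; exists 0%N => // y [].
have [j _ Ujx] := KU _ Kx.
have [y [[_ nUy] Uy]] := clx _ _ (ex_intro2 _ _ j.+1 I (@subset_refl _ (B j.+1)))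
  (open_nbhs_nbhs (conj (oU j) Ujx)).
by apply: nUy; rewrite big_ord_recr /=; right.
Qed.

Lemma compact_box_finite_subcover (C : 'I_m -> set S) (O : nat -> 'I_m -> set S) :
  (forall j, compact (C j)) -> (forall i j, open (O i j)) ->
  box C `<=` \bigcup_i box (O i) ->
  exists k, box C `<=` \big[setU/set0]_(i < k) box (O i).
Proof.
move=> cC oO; apply: compact_increasing_subcover; first exact: tychonoff.
by move=> i; exact: open_box.
Qed.

End BoxCover.

(* A copy of [T] carrying the semiring of sets [C] as its measurable sets;
   [pt] only serves the [isPointed] instance required by the library. *)
Definition semiring_carrier (T : Type) (pt : T) (C : set (set T)) := T.

Section CaratheodoryExtension.
Variables (R : realType) (T : Type) (pt : T) (C : set (set T)).
Hypotheses (C0 : C set0) (CI : setI_closed C) (CD : semi_setD_closed C) (CT : C setT).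
Variable Q : set T -> R.
Hypotheses (Q0 : Q set0 = 0) (Q_ge0 : forall A, 0 <= Q A) (Q1 : Q setT = 1).
Hypothesis Q_sigma : forall F : nat -> set T, (forall i, C (F i)) -> trivIset setT F ->
  C (\bigcup_i F i) -> (fun m => \sum_(i < m) Q (F i)) @ \oo --> Q (\bigcup_i F i).

HB.instance Definition _ := gen_eqMixin (semiring_carrier pt C).
HB.instance Definition _ := gen_choiceMixin (semiring_carrier pt C).
HB.instance Definition _ := isPointed.Build (semiring_carrier pt C) pt.
HB.instance Definition _ :=
  @isSemiRingOfSets.Build default_measure_display (semiring_carrier pt C) C C0 CI CD.

Let mu (A : set (semiring_carrier pt C)) : \bar R := (Q A)%:E.

Let mu0 : mu set0 = 0%E. Proof. by rewrite /mu Q0. Qed.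

Let mu_ge0 A : (0 <= mu A)%E. Proof. by rewrite lee_fin. Qed.

Let mu_sigma : semi_sigma_additive mu.
Proof.
move=> F CF tF CUF; rewrite /mu.
under eq_fun do rewrite big_mkord sumEFin.
by apply: cvg_EFin; [exact: nearW|exact: Q_sigma].
Qed.

HB.instance Definition _ := isMeasure.Build _ _ _ mu mu0 mu_ge0 mu_sigma.

Let ext := measure_extension mu.

Let extE A : C A -> ext A = (Q A)%:E.
Proof. exact: measurable_mu_extE. Qed.

Let ext_fin_num A : gen_sigma C A -> ext A \is a fin_num.
Proof.
move=> CA; rewrite ge0_fin_numE; last exact: measure_ge0.
apply: (@le_lt_trans _ _ (ext setT)); first by apply: le_measure; rewrite ?inE.
by rewrite extE // Q1 ltry.
Qed.

Lemma caratheodory_probability :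
  is_probability (gen_sigma C) (fun A => fine (ext A)) /\
  forall A, C A -> fine (ext A) = Q A.
Proof.
split; last by move=> A CA; rewrite extE.
split; first by rewrite extE // Q1.
  by move=> A _; apply: fine_ge0; exact: measure_ge0.
move=> B CB tB.
have ext_sigma : (fun m => \sum_(0 <= i < m) ext (B i)) @ \oo -->
    (fine (ext (\bigcup_i B i)))%:E.
  rewrite fineK; first exact: measure_sigma_additive.
  by apply: ext_fin_num; case: (smallest_sigma_algebra setT C) => _ _; apply.
have -> : (fun m => \sum_(i < m) fine (ext (B i))) =
    fine \o (fun m => \sum_(0 <= i < m) ext (B i)).
  apply: funext => m /=; rewrite -sum_fine ?big_mkord // => i _; exact: ext_fin_num.
exact: fine_cvg ext_sigma.
Qed.

End CaratheodoryExtension.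

Lemma probability_extension (R : realType) (T : Type) (C : set (set T)) (Q : set T -> R) :
  C set0 -> setI_closed C -> semi_setD_closed C -> C setT ->
  Q set0 = 0 -> (forall A, 0 <= Q A) -> Q setT = 1 ->
  (forall F : nat -> set T, (forall i, C (F i)) -> trivIset setT F ->
    C (\bigcup_i F i) -> (fun m => \sum_(i < m) Q (F i)) @ \oo --> Q (\bigcup_i F i)) ->
  exists2 P, is_probability (gen_sigma C) P & forall A, C A -> P A = Q A.
Proof.
move=> C0 CI CD CT Q0 Q_ge0 Q1 Q_sigma.
have [pt _] : [set: T] !=set0.
  by apply/set0P/negP => /eqP T0; move: Q1; rewrite T0 Q0 => /esym/eqP; rewrite oner_eq0.
have [Pprob PQ] := caratheodory_probability pt C0 CI CD CT Q0 Q_ge0 Q1 Q_sigma.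
by eexists; [exact: Pprob|exact: PQ].
Qed.

Lemma sum_div_pow2 (R : realType) (e : R) k :
  \sum_(i < k) e / 2 ^+ i.+2 = e / 2 - e / 2 ^+ k.+1.
Proof.
elim: k => [|k IH]; first by rewrite big_ord0 expr1 subrr.
rewrite big_ord_recr /= IH !exprS; field.
by rewrite expf_neq0.
Qed.

Lemma cvg_approx_from_below (R : realType) (u : nat -> R) l :
  {homo u : m k / (m <= k)%N >-> m <= k} -> (forall m, u m <= l) ->
  (forall e, 0 < e -> exists m, l <= u m + e) -> u @ \oo --> l.
Proof.
move=> u_incr u_le approx; apply/cvgrPdist_le => e e0.
have [m le_l] := approx e e0; near=> k.
have mk : (m <= k)%N by near: k; exists m.
rewrite ger0_norm ?subr_ge0 // lerBlDr (le_trans le_l) // addrC lerD2l.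
exact: u_incr.
Unshelve. all: by end_near.
Qed.

Section Extendibility.
Variables (R : realType) (S : topologicalType) (S0 : set (set S)) (n N : nat)
  (hn : (0 < n)%N) (hnN : (n < N)%N) (P : set ('I_n -> S) -> R)
  (G : nat -> set (set S)) (Pk : nat -> set ('I_n -> S) -> R).
Hypotheses (algS0 : set_algebra S0) (S0_gen : gen_sigma S0 = borel_sets S)
  (P_prob : is_probability (prod_sigma n (borel_sets S)) P)
  (P_exch : exchangeable (borel_sets S) P)
  (P_tight : forall eps : R, 0 < eps -> exists V, exists K,
     [/\ S0 V, compact K, V `<=` K & 1 - eps <= P [set x | V (x (Ordinal hn))]])
  (P_regular : forall (eps : R) V, 0 < eps -> S0 V -> exists O, exists W,
     [/\ open O, S0 W, V `<=` O, O `<=` W &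
         P [set x | (W `\` V) (x (Ordinal hn))] <= eps])
  (G_incr : forall k, G k `<=` G k.+1)
  (G_cup : \bigcup_k G k = S0)
  (Pk_prob : forall k, is_probability (prod_sigma n (G k)) (Pk k))
  (Pk_cvg : (fun k => sup [set `|Pk k A - P A| | A in prod_sigma n (G k)]) @ \oo --> (0 : R))
  (Pk_ext : forall k, extendible (ltnW hnN) (G k) (Pk k)).

Let le_nN := ltnW hnN.
Let T := 'I_N -> S.
Let P1 (E : set S) := P [set x | E (x (Ordinal hn))].

Let algPB m : set_algebra (prod_sigma m (borel_sets S)).
Proof. exact: gen_sigma_set_algebra. Qed.
Let algPG m k : set_algebra (prod_sigma m (G k)).
Proof. exact: gen_sigma_set_algebra. Qed.
Let P_add : additive_probability (prod_sigma n (borel_sets S)) P.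
Proof. exact: probability_additive (smallest_sigma_algebra _ _) P_prob. Qed.
Let Pk_add k : additive_probability (prod_sigma n (G k)) (Pk k).
Proof. exact: probability_additive (smallest_sigma_algebra _ _) (Pk_prob k). Qed.

Let S0_borel : S0 `<=` borel_sets S.
Proof. by rewrite -S0_gen; exact: sub_sigma_algebra. Qed.

Let G_mono k k' : (k <= k')%N -> G k `<=` G k'.
Proof.
elim: k' => [|k' IH]; first by rewrite leqn0 => /eqP ->.
by rewrite leq_eqVlt => /orP [/eqP ->//|/IH Gkk' A /Gkk']; exact: G_incr.
Qed.

Let G_borel k : G k `<=` borel_sets S.
Proof. by move=> A GA; apply: S0_borel; rewrite -G_cup; exists k. Qed.

Let prod_G_mono m k k' : (k <= k')%N -> prod_sigma m (G k) `<=` prod_sigma m (G k').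
Proof. by move=> kk'; apply: le_prod_sigma; exact: G_mono. Qed.

Let rects_S0_G m A : rects m S0 A -> exists k, prod_sigma m (G k) A.
Proof.
move=> [B S0B <-]; have /choice [kB GB] : forall i, exists k, G k (B i).
  by move=> i; have := S0B i; rewrite -G_cup => -[k _ GB]; exists k.
exists (\max_i kB i); apply: (@rects_prod_sigma _ _ (G (\max_i kB i))) => //.
by exists B => // i; exact: G_mono (leq_bigmax i) _ (GB i).
Qed.

Let Pk_cvg_pointwise A k0 : prod_sigma n (G k0) A -> (fun k => Pk k A) @ \oo --> P A.
Proof.
move=> GA; apply/cvgrPdist_le => e e0.
move/cvgr0Pnorm_lt: Pk_cvg => /(_ e e0) sup_small; near=> k.
have GkA : prod_sigma n (G k) A by apply: prod_G_mono GA; near: k; exists k0.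
have dist_le_sup : `|Pk k A - P A| <= sup [set `|Pk k B - P B| | B in prod_sigma n (G k)].
  apply: ub_le_sup; last by exists A.
  exists 2 => _ [B GB <-]; apply: le_trans (ler_normB _ _) _.
  have BB : prod_sigma n (borel_sets S) B by apply: le_prod_sigma GB; exact: G_borel.
  rewrite -[2]/(1 + 1) !ger0_norm ?(additive_prob_ge0 (Pk_add k)) ?(additive_prob_ge0 P_add) //.
  by rewrite lerD ?(additive_prob_le1 (algPG n k) (Pk_add k)) ?(additive_prob_le1 (algPB n) P_add).
rewrite distrC (le_trans dist_le_sup) // (le_trans (ler_norm _)) // ltW //.
by near: k; exact: sup_small.
Unshelve. all: by end_near.
Qed.

Let PNk_spec k : exists PN : set T -> R,
  [/\ is_probability (prod_sigma N (G k)) PN, exchangeable (G k) PN &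
      forall A, prod_sigma n (G k) A -> Pk k A = PN (cyl_ext le_nN A)].
Proof. by have [_ [_ ext]] := Pk_ext k. Qed.

Let PNk : nat -> set T -> R := projT1 (choice PNk_spec).
Let PNk_prob k : is_probability (prod_sigma N (G k)) (PNk k).
Proof. by case: (projT2 (choice PNk_spec) k). Qed.
Let PNk_exch k : exchangeable (G k) (PNk k).
Proof. by case: (projT2 (choice PNk_spec) k). Qed.
Let PNk_cyl k A : prod_sigma n (G k) A -> Pk k A = PNk k (cyl_ext le_nN A).
Proof. by case: (projT2 (choice PNk_spec) k) => _ _; apply. Qed.
Let PNk_add k : additive_probability (prod_sigma N (G k)) (PNk k).
Proof. exact: probability_additive (smallest_sigma_algebra _ _) (PNk_prob k). Qed.

(* Totalized so that every [f k] is a point of the cube [[0,1]^(set T)]. *)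
Let f k (A : set T) : R := if `[< prod_sigma N (G k) A >] then PNk k A else 0.

Let fE k A : prod_sigma N (G k) A -> f k A = PNk k A.
Proof. by move=> GA; rewrite /f; case: asboolP. Qed.

Let f01 k A : 0 <= f k A <= 1.
Proof.
rewrite /f; case: asboolP => GA; last by rewrite lexx ler01.
by rewrite (additive_prob_ge0 (PNk_add k)) ?(additive_prob_le1 (algPG N k) (PNk_add k)).
Qed.

Let Q : set T -> R := projT1 (cid (unit_cube_cluster_point f01)).
Let Q_spec := projT2 (cid (unit_cube_cluster_point f01)).
Let Q01 A : 0 <= Q A <= 1. Proof. by case: Q_spec. Qed.
Let Q_lim A c : (fun k => f k A) @ \oo --> c -> Q A = c.
Proof. by case: Q_spec => _ + _ _; apply. Qed.
Let Q_near_add A B C : (\forall k \near \oo, f k A = f k B + f k C) -> Q A = Q B + Q C.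
Proof. by case: Q_spec => _ _ + _; apply. Qed.
Let Q_near_eq A B : (\forall k \near \oo, f k A = f k B) -> Q A = Q B.
Proof. by case: Q_spec => _ _ _; apply. Qed.

Let U : set (set T) := [set A | exists k, prod_sigma N (G k) A].

Let U_near A : U A -> \forall k \near \oo, prod_sigma N (G k) A.
Proof. by move=> [k0 GA]; exists k0 => // k /= k0k; exact: prod_G_mono GA. Qed.

Let algU : set_algebra U.
Proof.
split.
- by exists 0%N; exact: (set_algebraT (algPG N 0)).
- by move=> A [k GA]; exists k; exact: (set_algebraC (algPG N k)).
- move=> A B [k GA] [k' GB]; exists (maxn k k'); apply: (set_algebraU (algPG N _)).
    by apply: prod_G_mono GA; exact: leq_maxl.
  by apply: prod_G_mono GB; exact: leq_maxr.
Qed.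

Let rects_U A : rects N S0 A -> U A. Proof. exact: rects_S0_G. Qed.

Let Q_add : additive_probability U Q.
Proof.
split.
- apply: Q_lim; apply: cvg_near_cst; apply: nearW => k.
  by rewrite fE; [exact: (additive_probT (PNk_add k))|exact: (set_algebraT (algPG N k))].
- by move=> A _; case/andP: (Q01 A).
- move=> A B UA UB AB; apply: Q_near_add; near=> k.
  have GA : prod_sigma N (G k) A by near: k; exact: U_near.
  have GB : prod_sigma N (G k) B by near: k; exact: U_near.
  rewrite !fE //; last exact: (set_algebraU (algPG N k)).
  exact: (additive_probU (PNk_add k)).
Unshelve. all: by end_near.
Qed.

Let Q_exch (s : {perm 'I_N}) A : U A -> Q A = Q [set x | A (fun i => x (s i))].
Proof.
move=> UA; apply: Q_near_eq; near=> k.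
have GA : prod_sigma N (G k) A by near: k; exact: U_near.
by rewrite !fE //; [exact: PNk_exch|exact: prod_sigma_reindex].
Unshelve. all: by end_near.
Qed.

Let Q_cyl A k0 : prod_sigma n (G k0) A -> Q (cyl_ext le_nN A) = P A.
Proof.
move=> GA; apply: Q_lim; apply: cvg_trans (Pk_cvg_pointwise GA); apply: near_eq_cvg.
near=> k; have GkA : prod_sigma n (G k) A by apply: prod_G_mono GA; near: k; exists k0.
by rewrite fE ?PNk_cyl //; exact: prod_sigma_reindex.
Unshelve. all: by end_near.
Qed.

Let S0_coord E (j : 'I_N) : S0 E -> U [set x : T | E (x j)].
Proof. by move=> S0E; apply: rects_U; apply: coord_preimage_rects => //; exact: set_algebraT. Qed.

(* Exchangeability moves coordinate [j] to the first one, where [Q] agrees with [P]. *)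
Let Q_marginal E (j : 'I_N) : S0 E -> Q [set x | E (x j)] = P1 E.
Proof.
move=> S0E; pose j0 := widen_ord le_nN (Ordinal hn).
have [k0 _ GE] : (\bigcup_k G k) E by rewrite G_cup.
rewrite (Q_exch (tperm j j0)) /=; last exact: S0_coord.
rewrite (tpermL j j0).
by apply: (Q_cyl (k0 := k0)); apply: sub_sigma_algebra; exists (Ordinal hn); exists E.
Qed.

Let P1_add : additive_probability S0 P1.
Proof.
have cylB E : S0 E -> prod_sigma n (borel_sets S) [set x | E (x (Ordinal hn))].
  by move=> S0E; apply: sub_sigma_algebra; exists (Ordinal hn); exists E => //; exact: S0_borel.
split.
- exact: (additive_probT P_add).
- by move=> E S0E; apply: (additive_prob_ge0 P_add); exact: cylB.
- move=> A B S0A S0B AB; apply: (additive_probU P_add); [exact: cylB|exact: cylB|].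
  by apply/seteqP; split => // x ABx; have : (A `&` B) (x (Ordinal hn)) by []; rewrite AB.
Qed.

Let Q_box_le (B' B : 'I_N -> set S) : (forall j, S0 (B' j)) -> (forall j, S0 (B j)) ->
  (forall j, B j `<=` B' j) ->
  Q (box B') <= Q (box B) + \sum_(j < N) P1 (B' j `\` B j).
Proof.
move=> S0B' S0B BB'.
have UB' : U (box B') by apply: rects_U; exists B'.
have UB : U (box B) by apply: rects_U; exists B.
have UD j : U [set x : T | (B' j `\` B j) (x j)] by apply: S0_coord; exact: set_algebraD.
rewrite (additive_probD algU Q_add UB' UB) ?lerD2l; last by move=> x Bx j; apply: BB'.
have box_diff : box B' `\` box B `<=` \big[setU/set0]_(j < N) [set x : T | (B' j `\` B j) (x j)].
  move=> x [B'x nBx]; apply/in_big_setU; apply: contrapT => nD; apply: nBx => j.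
  by apply: contrapT => nBj; apply: nD; exists j.
apply: le_trans (le_additive_prob algU Q_add _ _ box_diff) _.
- exact: set_algebra_big_setU.
- exact: set_algebraD.
apply: le_trans (additive_prob_big_subadditive algU Q_add UD) _.
by apply: ler_sum => j _; rewrite Q_marginal //; exact: set_algebraD.
Qed.

(* Combine (a) with (b) applied to [~` B]. *)
Let S0_inner_compact (B : set S) (d : R) : S0 B -> 0 < d -> exists D, exists C,
  [/\ S0 D, compact C, D `<=` C, C `<=` B & P1 (B `\` D) <= d].
Proof.
move=> S0B d0; have d2 : 0 < d / 2 by rewrite divr_gt0.
have S0nB := set_algebraC algS0 S0B.
have [Op [W [oOp S0W nBOp OpW PW]]] := P_regular d2 S0nB.
have [V [K [S0V cK VK PV]]] := P_tight d2.
have S0D : S0 (V `\` W) by exact: (set_algebraD algS0).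
have S0nV := set_algebraC algS0 S0V.
have S0WB : S0 (W `\` ~` B) by exact: (set_algebraD algS0).
exists (V `\` W); exists (K `\` Op); split => //.
- by rewrite setDE; apply: compact_closedI => //; exact: open_closedC.
- by move=> x [Vx nWx]; split; [exact: VK|move=> Ox; apply/nWx/OpW].
- by move=> x [_ nOpx]; apply: contrapT => nBx; apply/nOpx/nBOp.
have BD : B `\` (V `\` W) `<=` (W `\` ~` B) `|` ~` V.
  move=> x [Bx nDx]; have [Vx|] := pselect (V x); last by right.
  by left; split=> [|/(_ Bx)//]; apply: contrapT => nWx; exact: nDx.
apply: le_trans (le_additive_prob algS0 P1_add (set_algebraU algS0 S0WB S0nV) _ BD) _.
  exact: (set_algebraD algS0).
apply: le_trans (additive_prob_subadditive algS0 P1_add S0WB S0nV) _.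
rewrite (additive_probC algS0 P1_add S0V) (splitr d) lerD //.
by rewrite lerBlDl -lerBlDr.
Qed.

Let sum_div_N (d : R) : \sum_(j < N) (d / N%:R) = d.
Proof.
rewrite sumr_const card_ord -[X in X = d]mulr_natr divfK // pnatr_eq0 -lt0n.
exact: leq_trans hn le_nN.
Qed.

Let div_N_gt0 (d : R) : 0 < d -> 0 < d / N%:R.
Proof. by move=> d0; rewrite divr_gt0 // ltr0n (leq_trans hn le_nN). Qed.

Let box_inner_compact (B : 'I_N -> set S) (d : R) : (forall j, S0 (B j)) -> 0 < d ->
  exists D : 'I_N -> set S, exists C : 'I_N -> set S,
  [/\ forall j, S0 (D j), forall j, compact (C j), forall j, D j `<=` C j,
      forall j, C j `<=` B j & Q (box B) <= Q (box D) + d].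
Proof.
move=> S0B d0; have /choice [DC DC_spec] : forall j, exists DC : set S * set S,
    [/\ S0 DC.1, compact DC.2, DC.1 `<=` DC.2, DC.2 `<=` B j & P1 (B j `\` DC.1) <= d / N%:R].
  by move=> j; have [D [C spec]] := S0_inner_compact (S0B j) (div_N_gt0 d0); exists (D, C).
exists (fun j => (DC j).1); exists (fun j => (DC j).2).
split=> [j|j|j|j|]; try by case: (DC_spec j).
apply: le_trans (Q_box_le (B := fun j => (DC j).1) S0B _ _) _.
- by move=> j; case: (DC_spec j).
- by move=> j; case: (DC_spec j) => _ _ DC12 C2B _ x Dx; exact: C2B _ (DC12 _ Dx).
by rewrite lerD2l -[leRHS]sum_div_N; apply: ler_sum => j _; case: (DC_spec j).
Qed.

Let box_outer_open (B : 'I_N -> set S) (d : R) : (forall j, S0 (B j)) -> 0 < d ->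
  exists O : 'I_N -> set S, exists W : 'I_N -> set S,
  [/\ forall j, open (O j), forall j, S0 (W j), forall j, B j `<=` O j,
      forall j, O j `<=` W j & Q (box W) <= Q (box B) + d].
Proof.
move=> S0B d0; have /choice [OW OW_spec] : forall j, exists OW : set S * set S,
    [/\ open OW.1, S0 OW.2, B j `<=` OW.1, OW.1 `<=` OW.2 & P1 (OW.2 `\` B j) <= d / N%:R].
  by move=> j; have [Op [W spec]] := P_regular (div_N_gt0 d0) (S0B j); exists (Op, W).
exists (fun j => (OW j).1); exists (fun j => (OW j).2).
split=> [j|j|j|j|]; try by case: (OW_spec j).
apply: le_trans (Q_box_le (B' := fun j => (OW j).2) _ S0B _) _.
- by move=> j; case: (OW_spec j).
- by move=> j; case: (OW_spec j) => _ _ BO OW12 _ x Bx; exact: OW12 _ (BO _ Bx).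
by rewrite lerD2l -[leRHS]sum_div_N; apply: ler_sum => j _; case: (OW_spec j).
Qed.

Let Q_box_cover (A : set T) (F : nat -> set T) (e : R) :
  rects N S0 A -> (forall i, rects N S0 (F i)) -> A `<=` \bigcup_i F i -> 0 < e ->
  exists k, Q A <= \sum_(i < k) Q (F i) + e.
Proof.
move=> [BA S0BA <-] rectsF AF e0; have e2 : 0 < e / 2 by rewrite divr_gt0.
have [D [C [S0D cC DC CBA QD]]] := box_inner_compact S0BA e2.
have /choice [BF BF_spec] : forall i, exists B, (forall j, S0 (B j)) /\ box B = F i.
  by move=> i; have [B S0B FB] := rectsF i; exists B.
have eps_i_gt0 i : 0 < e / 2 ^+ i.+2 by rewrite divr_gt0 // exprn_gt0.
have /choice [OW OW_spec] : forall i, exists OW : ('I_N -> set S) * ('I_N -> set S),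
    [/\ forall j, open (OW.1 j), forall j, S0 (OW.2 j), forall j, BF i j `<=` OW.1 j,
        forall j, OW.1 j `<=` OW.2 j & Q (box OW.2) <= Q (box (BF i)) + e / 2 ^+ i.+2].
  move=> i; have [S0B _] := BF_spec i.
  by have [Op [W spec]] := box_outer_open S0B (eps_i_gt0 i); exists (Op, W).
have cover : box C `<=` \bigcup_i box (OW i).1.
  move=> x Cx; have [i _ Fix] : (\bigcup_i F i) x by apply: AF => j; apply/CBA/Cx.
  exists i => // j; case: (OW_spec i) => _ _ BO _ _; apply: BO.
  by move: Fix; rewrite -(BF_spec i).2; apply.
have oO i j : open ((OW i).1 j) by case: (OW_spec i).
have [k Ck] := compact_box_finite_subcover cC oO cover.
have UW i : U (box (OW i).2) by apply: rects_U; exists (OW i).2 => // j; case: (OW_spec i).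
have DW : box D `<=` \big[setU/set0]_(i < k) box (OW i).2.
  move=> x Dx; have /Ck /in_big_setU [i Oix] : box C x by move=> j; exact/DC/Dx.
  by apply/in_big_setU; exists i => j; case: (OW_spec i) => _ _ _ OW12 _; exact/OW12/Oix.
exists k; apply: le_trans QD _; rewrite [e in leRHS]splitr addrA lerD2r.
have UD : U (box D) by apply: rects_U; exists D.
apply: le_trans (le_additive_prob algU Q_add (set_algebra_big_setU algU _) UD DW) _ => //.
apply: le_trans (additive_prob_big_subadditive algU Q_add (fun i : 'I_k => UW i)) _.
have QW i : Q (box (OW i).2) <= Q (box (BF i)) + e / 2 ^+ i.+2 by case: (OW_spec i).
apply: le_trans (ler_sum _ (fun (i : 'I_k) _ => QW i)) _; rewrite big_split lerD //=.
  by apply: ler_sum => i _; rewrite (BF_spec i).2.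
by rewrite sum_div_pow2 lerBlDr lerDl; apply: divr_ge0; [exact: ltW|exact: exprn_ge0].
Qed.

Let Q_sigma (F : nat -> set T) : (forall i, rects N S0 (F i)) -> trivIset setT F ->
  rects N S0 (\bigcup_i F i) ->
  (fun m => \sum_(i < m) Q (F i)) @ \oo --> Q (\bigcup_i F i).
Proof.
move=> rectsF tF rectsUF; have UF i : U (F i) by exact: rects_U.
have UUF m : U (\big[setU/set0]_(i < m) F i) by apply: set_algebra_big_setU.
have sumQE m : \sum_(i < m) Q (F i) = Q (\big[setU/set0]_(i < m) F i).
  rewrite (additive_prob_big_additive algU Q_add (E := fun i : 'I_m => F i)) // => i j ij.
  apply/seteqP; split => // x Fijx.
  have /val_inj eq_ij : (i : nat) = j by apply: tF => //; exists x.
  by move: ij; rewrite eq_ij eqxx.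
apply: cvg_approx_from_below.
- move=> m k mk; rewrite !sumQE (le_additive_prob algU Q_add) //.
  exact: subset_bigsetU.
- move=> m; rewrite sumQE (le_additive_prob algU Q_add) //; first exact: rects_U.
  by move=> x /in_big_setU [i Fix]; exists i.
- by move=> e e0; exact: Q_box_cover.
Qed.

Let prod_borel_rects m : prod_sigma m (borel_sets S) = gen_sigma (rects m S0).
Proof. by rewrite -S0_gen prod_sigma_gen_rects //; exact: set_algebraT. Qed.

Let PN_spec : exists2 PN, is_probability (prod_sigma N (borel_sets S)) PN &
  forall A, rects N S0 A -> PN A = Q A.
Proof.
rewrite prod_borel_rects; apply: probability_extension => //.
- by apply: rects0 => //; exact: leq_trans hn le_nN.
- exact: rects_setI_closed.
- exact: rects_semi_setD_closed.
- exact: rectsT.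
- exact: additive_prob0 algU Q_add.
- by move=> A; case/andP: (Q01 A).
- exact: additive_probT Q_add.
Qed.

Lemma extendible_of_uniform_approximation : extendible le_nN (borel_sets S) P.
Proof.
have [PN PN_prob PNQ] := PN_spec.
have PN_preimage m (h : T -> 'I_m -> S) :
    (forall A, prod_sigma m (borel_sets S) A -> prod_sigma N (borel_sets S) (h @^-1` A)) ->
    is_probability (gen_sigma (rects m S0)) (fun A => PN (h @^-1` A)).
  by move=> hB; rewrite -prod_borel_rects; exact: (probability_preimage PN_prob hB).
split=> //; split=> //; exists PN; split=> // [s A|A].
- rewrite prod_borel_rects => rectsA.
  apply: (@probability_unique _ _ _ PN (fun B => PN [set x | B (fun i => x (s i))])
    (@rects_setI_closed _ N _ algS0) (@rectsT _ N _ algS0) _ _ _ A rectsA).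
  + by rewrite -prod_borel_rects.
  + by apply: PN_preimage => B; exact: prod_sigma_reindex.
  + move=> B rectsB; rewrite !PNQ //; last exact: rects_perm.
    by apply: Q_exch; exact: rects_U.
- rewrite prod_borel_rects => rectsA.
  apply: (@probability_unique _ _ _ P (fun B => PN (cyl_ext le_nN B))
    (@rects_setI_closed _ n _ algS0) (@rectsT _ n _ algS0) _ _ _ A rectsA).
  + by rewrite -prod_borel_rects.
  + by apply: PN_preimage => B; exact: prod_sigma_reindex.
  + move=> B rectsB; rewrite PNQ; last by apply: rects_cyl_ext => //; exact: set_algebraT.
    by have [k GB] := rects_S0_G rectsB; rewrite (Q_cyl GB).
Qed.

End Extendibility.

Theorem theorem6 (R : realType) (S : topologicalType)
  (S0 : set (set S)) (n N : nat) (hn : (0 < n)%N) (hnN : (n < N)%N)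
  (P : set ('I_n -> S) -> R)
  (G : nat -> set (set S)) (Pk : nat -> set ('I_n -> S) -> R) :
  hausdorff_space S ->
  locally_compact [set: S] ->
  set_algebra S0 ->
  gen_sigma S0 = borel_sets S ->
  is_probability (prod_sigma n (borel_sets S)) P ->
  exchangeable (borel_sets S) P ->
  (* (a) *)
  (forall eps : R, 0 < eps -> exists V, exists K,
     [/\ S0 V, compact K, V `<=` K &
         1 - eps <= P [set x | V (x (Ordinal hn))]]) ->
  (* (b) *)
  (forall (eps : R) V, 0 < eps -> S0 V -> exists O, exists W,
     [/\ open O, S0 W, V `<=` O, O `<=` W &
         P [set x | (W `\` V) (x (Ordinal hn))] <= eps]) ->
  (forall k, sigma_algebra setT (G k)) ->
  (forall k, G k `<=` G k.+1) ->
  \bigcup_k G k = S0 ->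
  (forall k, is_probability (prod_sigma n (G k)) (Pk k)) ->
  (fun k => sup [set `|Pk k A - P A| | A in prod_sigma n (G k)]) @ \oo --> (0 : R) ->
  (forall k, extendible (ltnW hnN) (G k) (Pk k)) ->
  extendible (ltnW hnN) (borel_sets S) P.
Proof.
move=> _ _ algS0 S0_gen P_prob P_exch P_tight P_regular _ G_incr G_cup Pk_prob Pk_cvg Pk_ext.
exact: (extendible_of_uniform_approximation algS0 S0_gen P_prob P_exch P_tight P_regular
  G_incr G_cup Pk_prob Pk_cvg Pk_ext).
Qed.
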